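(* Let $(\Sigma_+,\Sigma_-,N_1,N_2,N_3)$ be a solution of the Wainwright–Hsu system satisfying the constraint, with $N_1<0$ and $N_2,N_3>0$. Then $N_1(N_2+N_3)$ does not converge to $0$ as $\tau\to\infty$.
   Context: Wainwright–Hsu system: for functions $N_1,N_2,N_3,\Sigma_+,\Sigma_-$ of $\tau\in\mathbb{R}$ (prime denotes $d/d\tau$), $N_1'=(q-4\Sigma_+)N_1$, $N_2'=(q+2\Sigma_++2\sqrt3\Sigma_-)N_2$, $N_3'=(q+2\Sigma_+-2\sqrt3\Sigma_-)N_3$, $\Sigma_+'=-(2-q)\Sigma_+-3S_+$, $\Sigma_-'=-(2-q)\Sigma_--3S_-$, where $q=2(\Sigma_+^2+\Sigma_-^2)$, $S_+=\frac12[(N_2-N_3)^2-N_1(2N_1-N_2-N_3)]$, $S_-=\frac{\sqrt3}{2}(N_3-N_2)(N_1-N_2-N_3)$, together with the constraint $\Sigma_+^2+\Sigma_-^2+\frac34[N_1^2+N_2^2+N_3^2-2(N_1N_2+N_2N_3+N_1N_3)]=1$. Solutions with these sign conditions exist for all $\tau\in\mathbb{R}$. *)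

From Stdlib Require Import Reals.
From Coquelicot Require Import Coquelicot.
Open Scope R_scope.

Definition WH_q (Sp Sm : R) : R := 2 * (Sp ^ 2 + Sm ^ 2).

Definition WH_Splus (N1 N2 N3 : R) : R :=
  / 2 * ((N2 - N3) ^ 2 - N1 * (2 * N1 - N2 - N3)).

Definition WH_Sminus (N1 N2 N3 : R) : R :=
  sqrt 3 / 2 * (N3 - N2) * (N1 - N2 - N3).

Definition WH_solution (N1 N2 N3 Sp Sm : R -> R) : Prop :=
  forall t : R,
    is_derive N1 t ((WH_q (Sp t) (Sm t) - 4 * Sp t) * N1 t) /\
    is_derive N2 t ((WH_q (Sp t) (Sm t) + 2 * Sp t + 2 * sqrt 3 * Sm t) * N2 t) /\
    is_derive N3 t ((WH_q (Sp t) (Sm t) + 2 * Sp t - 2 * sqrt 3 * Sm t) * N3 t) /\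
    is_derive Sp t (- (2 - WH_q (Sp t) (Sm t)) * Sp t
                    - 3 * WH_Splus (N1 t) (N2 t) (N3 t)) /\
    is_derive Sm t (- (2 - WH_q (Sp t) (Sm t)) * Sm t
                    - 3 * WH_Sminus (N1 t) (N2 t) (N3 t)).

Definition WH_constraint (N1 N2 N3 Sp Sm : R -> R) : Prop :=
  forall t : R,
    Sp t ^ 2 + Sm t ^ 2
    + 3 / 4 * (N1 t ^ 2 + N2 t ^ 2 + N3 t ^ 2
               - 2 * (N1 t * N2 t + N2 t * N3 t + N1 t * N3 t)) = 1.

(* The product N1 N2 N3 is nonincreasing, since its logarithmic derivative is 3q >= 0.
   Hence if N1 (N2 + N3) -> 0, then -N1 <= (N1 (N2 + N3))^2 / (4 |N1 N2 N3|(0)) -> 0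
   as well.  Once N1 and N1 (N2 + N3) are small, the function
   F = N1^2 N2 N3 exp (-2/sqrt 3 * Sm (N2 - N3) / (N2 + N3)) is nondecreasing, so it
   stays above a positive constant; but F <= e^2 (N1 (N2 + N3))^2 / 4 -> 0. *)
From Stdlib Require Import Reals Lra Psatz.
From Coquelicot Require Import Coquelicot.
Open Scope R_scope.

Lemma is_derive_mult_R (f g : R -> R) (x df dg : R) :
  is_derive f x df -> is_derive g x dg ->
  is_derive (fun t => f t * g t) x (df * g x + f x * dg).
Proof. intros Hf Hg. apply (is_derive_mult f g x df dg Hf Hg), Rmult_comm. Qed.

Lemma is_derive_exp_comp (g : R -> R) (x dg : R) :
  is_derive g x dg -> is_derive (fun t => exp (g t)) x (dg * exp (g x)).
Proof. intros Hg. apply (is_derive_comp exp g x _ dg (is_derive_exp (g x)) Hg). Qed.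

Lemma is_derive_eq (f : R -> R) (x l l' : R) :
  is_derive f x l -> l = l' -> is_derive f x l'.
Proof. intros H ->; exact H. Qed.

Lemma le_of_is_derive_nonneg (f df : R -> R) (a b : R) :
  (forall t, is_derive f t (df t)) -> (forall t, a <= t <= b -> 0 <= df t) ->
  a <= b -> f a <= f b.
Proof.
  intros Hd Hpos Hab.
  destruct (MVT_gen f a b df) as [c [Hc Heq]].
  - intros x _; apply Hd.
  - intros x _. apply continuity_pt_filterlim.
    apply (ex_derive_continuous (K := R_AbsRing) (V := R_NormedModule)).
    eexists; apply Hd.
  - rewrite Rmin_left, Rmax_right in Hc by lra.
    assert (0 <= df c) by (apply Hpos; lra). nra.
Qed.

Lemma is_lim_p_infty_0_sq_lt (g : R -> R) : is_lim g p_infty 0 ->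
  forall eps, 0 < eps -> exists M, forall t, M < t -> g t ^ 2 < eps.
Proof.
  intros Hg eps Heps.
  apply is_lim_spec in Hg.
  destruct (Hg (mkposreal _ (sqrt_lt_R0 eps Heps))) as [M HM].
  exists M. intros t Ht. specialize (HM t Ht). simpl in HM.
  rewrite Rminus_0_r in HM.
  rewrite <- (sqrt_sqrt eps) by lra.
  rewrite <- Rsqr_pow2. apply Rsqr_lt_abs_1. rewrite (Rabs_pos_eq (sqrt eps)).
  - exact HM.
  - apply sqrt_pos.
Qed.

Definition WH_constraint_at (n1 n2 n3 sp sm : R) : Prop :=
  sp ^ 2 + sm ^ 2
  + 3 / 4 * (n1 ^ 2 + n2 ^ 2 + n3 ^ 2 - 2 * (n1 * n2 + n2 * n3 + n1 * n3)) = 1.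

Lemma WH_constraint_sigma_le1 (n1 n2 n3 sp sm : R) :
  n1 < 0 -> 0 < n2 -> 0 < n3 -> WH_constraint_at n1 n2 n3 sp sm ->
  sp ^ 2 + sm ^ 2 <= 1.
Proof.
  unfold WH_constraint_at. intros H1 H2 H3 Hc.
  assert (0 <= (n2 - n3) ^ 2) by apply pow2_ge_0.
  assert (0 <= n1 ^ 2) by apply pow2_ge_0.
  assert (0 <= - n1 * (n2 + n3)) by nra.
  nra.
Qed.

Lemma sq_mul_le_quarter_sq (n1 n2 n3 : R) :
  n1 ^ 2 * n2 * n3 <= (n1 * (n2 + n3)) ^ 2 / 4.
Proof.
  assert (0 <= n1 ^ 2 * (n2 - n3) ^ 2) by (apply Rmult_le_pos; apply pow2_ge_0).
  nra.
Qed.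

Definition WH_lyapunov (n1 n2 n3 sm : R) : R :=
  n1 ^ 2 * n2 * n3 * exp (- (2 / sqrt 3) * (sm * (n2 - n3) / (n2 + n3))).

(* The logarithmic derivative of [WH_lyapunov] along the flow, after simplification. *)
Definition WH_lyapunov_rate (n1 n2 n3 sp sm : R) : R :=
  let u := sm * (n2 - n3) / (n2 + n3) in
  8 * sp ^ 2 + 4 * sm ^ 2 - 4 * sp + 3 * (n2 - n3) ^ 2
  + 4 * u ^ 2 + 2 / sqrt 3 * (2 - WH_q sp sm) * u
  - 3 * (n2 - n3) ^ 2 * n1 / (n2 + n3).

Lemma WH_lyapunov_pos (n1 n2 n3 sm : R) :
  n1 < 0 -> 0 < n2 -> 0 < n3 -> 0 < WH_lyapunov n1 n2 n3 sm.
Proof.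
  intros H1 H2 H3. unfold WH_lyapunov.
  assert (0 < n1 ^ 2) by nra.
  apply Rmult_lt_0_compat; [| apply exp_pos].
  apply Rmult_lt_0_compat; [| lra]. apply Rmult_lt_0_compat; lra.
Qed.

Lemma exp_le_compat (x y : R) : x <= y -> exp x <= exp y.
Proof.
  intros [Hlt | ->]; [left; apply exp_increasing, Hlt | right; reflexivity].
Qed.

Lemma WH_lyapunov_le (n1 n2 n3 sm : R) :
  0 < n2 -> 0 < n3 -> sm ^ 2 <= 1 ->
  WH_lyapunov n1 n2 n3 sm <= (n1 * (n2 + n3)) ^ 2 / 4 * exp 2.
Proof.
  intros H2 H3 Hsm. unfold WH_lyapunov.
  set (u := sm * (n2 - n3) / (n2 + n3)).
  assert (Hu : - u <= 1).
  { assert (Hsm1 : - 1 <= sm <= 1) by (split; nra).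
    assert (Hnum : - (sm * (n2 - n3)) <= n2 + n3) by nra.
    assert (Eu : u * (n2 + n3) = sm * (n2 - n3)) by (unfold u; field; lra).
    nra. }
  assert (Hs : 1 <= sqrt 3) by (rewrite <- sqrt_1; apply sqrt_le_1_alt; lra).
  assert (Hc : 0 < 2 / sqrt 3 <= 2).
  { split; [apply Rdiv_lt_0_compat; lra |].
    apply Rmult_le_reg_r with (sqrt 3); [lra |].
    unfold Rdiv. rewrite Rmult_assoc, Rinv_l by lra. lra. }
  apply Rmult_le_compat.
  - assert (0 <= n1 ^ 2) by apply pow2_ge_0. apply Rmult_le_pos; [| lra].
    apply Rmult_le_pos; lra.
  - left; apply exp_pos.
  - apply sq_mul_le_quarter_sq.
  - apply exp_le_compat. nra.
Qed.

Lemma WH_lyapunov_rate_nonneg (n1 n2 n3 sp sm : R) :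
  n1 < 0 -> 0 < n2 -> 0 < n3 -> WH_constraint_at n1 n2 n3 sp sm ->
  n1 ^ 2 <= 1 / 3 -> - (n1 * (n2 + n3)) <= 1 / 6 ->
  0 <= WH_lyapunov_rate n1 n2 n3 sp sm.
Proof.
  intros H1 H2 H3 Hc Hn1 Hf.
  pose proof (WH_constraint_sigma_le1 n1 n2 n3 sp sm H1 H2 H3 Hc) as Hsig.
  unfold WH_constraint_at in Hc. unfold WH_lyapunov_rate, WH_q.
  set (D := n2 - n3). set (P := n2 + n3).
  set (u := sm * D / P). set (q := 2 * (sp ^ 2 + sm ^ 2)).
  set (a := 2 / sqrt 3 * (2 - q)).
  assert (HP : 0 < P) by (unfold P; lra).
  assert (Ha2 : a ^ 2 = 4 / 3 * (2 - q) ^ 2).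
  { unfold a. assert (Hs : sqrt 3 * sqrt 3 = 3) by (apply sqrt_sqrt; lra).
    assert (0 < sqrt 3) by (apply sqrt_lt_R0; lra).
    replace ((2 / sqrt 3 * (2 - q)) ^ 2) with (4 * (2 - q) ^ 2 / (sqrt 3 * sqrt 3))
      by (field; lra).
    rewrite Hs. field. }
  assert (HD2 : 3 * D ^ 2 = 4 - 4 * sp ^ 2 - 4 * sm ^ 2 - 3 * n1 ^ 2 + 6 * n1 * P)
    by (unfold D, P; nra).
  assert (Hq : 0 <= q <= 2) by (unfold q; split; nra).
  (* completing the square: [4 u^2 + a u >= - a^2 / 16 >= - 1/3] *)
  assert (Hua : 4 * u ^ 2 + a * u >= - 1 / 3).
  { assert (0 <= (2 * u + a / 4) ^ 2) by apply pow2_ge_0. nra. }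
  assert (Hn : 0 <= - (3 * D ^ 2 * n1 / P)).
  { assert (0 <= D ^ 2) by apply pow2_ge_0.
    assert (0 <= 3 * D ^ 2 * - n1 / P) by (apply Rdiv_le_0_compat; nra).
    unfold Rdiv in *. lra. }
  assert (0 <= (2 * sp - 1) ^ 2) by apply pow2_ge_0.
  fold P in Hf. lra.
Qed.

Section NegativeN1.

Variables N1 N2 N3 Sp Sm : R -> R.
Hypothesis Hsol : WH_solution N1 N2 N3 Sp Sm.
Hypothesis Hcon : WH_constraint N1 N2 N3 Sp Sm.
Hypothesis Hsign : forall t, N1 t < 0 /\ 0 < N2 t /\ 0 < N3 t.

Lemma N1N2N3_nonincreasing (s t : R) :
  s <= t -> N1 t * N2 t * N3 t <= N1 s * N2 s * N3 s.
Proof.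
  intros Hst.
  enough (- (N1 s * N2 s * N3 s) <= - (N1 t * N2 t * N3 t)) by lra.
  apply (le_of_is_derive_nonneg (fun t => - (N1 t * N2 t * N3 t))
           (fun t => - (3 * WH_q (Sp t) (Sm t) * (N1 t * N2 t * N3 t)))); [| | lra].
  - intros x. destruct (Hsol x) as [d1 [d2 [d3 _]]].
    eapply is_derive_eq.
    + apply (is_derive_opp (fun t => N1 t * N2 t * N3 t)).
      apply is_derive_mult_R; [apply is_derive_mult_R |]; eassumption.
    + unfold WH_q, opp. simpl. ring.
  - intros x _. destruct (Hsign x) as [H1 [H2 H3]]. unfold WH_q.
    assert (0 <= Sp x ^ 2 + Sm x ^ 2) by (apply Rplus_le_le_0_compat; apply pow2_ge_0).
    assert (N1 x * N2 x * N3 x < 0).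
    { assert (N1 x * N2 x < 0) by nra. nra. }
    nra.
Qed.

Lemma neg_N1_mul_le (t : R) : 0 <= t ->
  - N1 t * - (N1 0 * N2 0 * N3 0) <= (N1 t * (N2 t + N3 t)) ^ 2 / 4.
Proof.
  intros Ht.
  pose proof (N1N2N3_nonincreasing 0 t Ht) as Hdecr.
  pose proof (sq_mul_le_quarter_sq (N1 t) (N2 t) (N3 t)).
  destruct (Hsign t) as [HN1 _].
  assert (0 <= - N1 t * (N1 0 * N2 0 * N3 0 - N1 t * N2 t * N3 t))
    by (apply Rmult_le_pos; lra).
  nra.
Qed.

Lemma N1_eventually_small : is_lim (fun t => N1 t * (N2 t + N3 t)) p_infty 0 ->
  exists T, forall t, T <= t -> N1 t ^ 2 <= 1 / 3 /\ - (N1 t * (N2 t + N3 t)) <= 1 / 6.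
Proof.
  intros Hlim.
  set (c := - (N1 0 * N2 0 * N3 0)).
  assert (Hc : 0 < c).
  { destruct (Hsign 0) as [H1 [H2 H3]].
    assert (N1 0 * N2 0 < 0) by nra. unfold c. nra. }
  destruct (is_lim_p_infty_0_sq_lt _ Hlim (Rmin (1 / 36) (2 * c)))
    as [M HM]; [apply Rmin_pos; lra |].
  exists (Rmax M 0 + 1). intros t Ht.
  pose proof (Rmax_l M 0) as HM0. pose proof (Rmax_r M 0) as H0M.
  specialize (HM t ltac:(lra)).
  pose proof (Rmin_l (1 / 36) (2 * c)) as Hmin1. pose proof (Rmin_r (1 / 36) (2 * c)) as Hmin2.
  pose proof (neg_N1_mul_le t ltac:(lra)) as HN1. fold c in HN1.
  destruct (Hsign t) as [H1 [H2 H3]].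
  assert (- N1 t < 1 / 2) by nra.
  split; nra.
Qed.

Lemma is_derive_WH_lyapunov (t : R) :
  is_derive (fun t => WH_lyapunov (N1 t) (N2 t) (N3 t) (Sm t)) t
    (WH_lyapunov (N1 t) (N2 t) (N3 t) (Sm t)
     * WH_lyapunov_rate (N1 t) (N2 t) (N3 t) (Sp t) (Sm t)).
Proof.
  destruct (Hsol t) as [d1 [d2 [d3 [_ d5]]]].
  destruct (Hsign t) as [H1 [H2 H3]].
  assert (0 < sqrt 3) by (apply sqrt_lt_R0; lra).
  unfold WH_lyapunov. eapply is_derive_eq.
  { apply is_derive_mult_R.
    - apply is_derive_mult_R; [apply is_derive_mult_R |].
      + apply (is_derive_pow N1 2), d1.
      + exact d2.
      + exact d3.
    - apply is_derive_exp_comp, is_derive_scal, is_derive_div.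
      + apply is_derive_mult_R; [exact d5 |].
        apply (is_derive_minus N2 N3); eassumption.
      + apply (is_derive_plus N2 N3); eassumption.
      + lra. }
  unfold WH_lyapunov_rate, WH_q, WH_Sminus, minus. simpl. unfold plus, opp. simpl.
  set (E := exp _). field. lra.
Qed.

Lemma WH_lyapunov_nondecreasing (T t : R) :
  (forall s, T <= s -> N1 s ^ 2 <= 1 / 3 /\ - (N1 s * (N2 s + N3 s)) <= 1 / 6) ->
  T <= t ->
  WH_lyapunov (N1 T) (N2 T) (N3 T) (Sm T) <= WH_lyapunov (N1 t) (N2 t) (N3 t) (Sm t).
Proof.
  intros Hsmall Ht.
  apply (le_of_is_derive_nonneg _ _ T t is_derive_WH_lyapunov); [| exact Ht].
  intros s [Hs _]. destruct (Hsign s) as [H1 [H2 H3]]. destruct (Hsmall s Hs).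
  apply Rmult_le_pos.
  - left. apply WH_lyapunov_pos; assumption.
  - apply WH_lyapunov_rate_nonneg; try assumption. exact (Hcon s).
Qed.

End NegativeN1.

Theorem mainTheorem15 (N1 N2 N3 Sp Sm : R -> R) :
  WH_solution N1 N2 N3 Sp Sm ->
  WH_constraint N1 N2 N3 Sp Sm ->
  (forall t : R, N1 t < 0 /\ 0 < N2 t /\ 0 < N3 t) ->
  ~ is_lim (fun t => N1 t * (N2 t + N3 t)) p_infty 0.
Proof.
  intros Hsol Hcon Hsign Hlim.
  destruct (N1_eventually_small N1 N2 N3 Sp Sm Hsol Hsign Hlim) as [T HT].
  set (F := fun t => WH_lyapunov (N1 t) (N2 t) (N3 t) (Sm t)).
  assert (HFT : 0 < F T) by (destruct (Hsign T) as [? [? ?]]; apply WH_lyapunov_pos; auto).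
  destruct (is_lim_p_infty_0_sq_lt _ Hlim (4 * F T / exp 2)) as [M HM].
  { apply Rdiv_lt_0_compat; [lra | apply exp_pos]. }
  set (t := Rmax T M + 1).
  pose proof (Rmax_l T M). pose proof (Rmax_r T M).
  assert (Hgrow : F T <= F t)
    by (apply (WH_lyapunov_nondecreasing N1 N2 N3 Sp Sm); auto; unfold t; lra).
  assert (Hbound : F t <= (N1 t * (N2 t + N3 t)) ^ 2 / 4 * exp 2).
  { destruct (Hsign t) as [H1 [H2 H3]].
    apply WH_lyapunov_le; [exact H2 | exact H3 |].
    pose proof (WH_constraint_sigma_le1 _ _ _ _ _ H1 H2 H3 (Hcon t)).
    assert (0 <= Sp t ^ 2) by apply pow2_ge_0. lra. }
  specialize (HM t ltac:(unfold t; lra)).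
  assert (Hsmall : (N1 t * (N2 t + N3 t)) ^ 2 * exp 2 < 4 * F T).
  { pose proof (exp_pos 2).
    apply (Rmult_lt_compat_r (exp 2)) in HM; [| lra].
    unfold Rdiv in HM. rewrite Rmult_assoc, Rinv_l in HM by lra. lra. }
  lra.
Qed.
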